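(* Let $(X,r)$ be a finite non-degenerate solution. The group $(\mathcal{S},\circ)$ acts on $X$ by $(\sigma_a,\gamma_b)\cdot x=\sigma_a\lambda_b(x)$; more precisely, the map $(\mathcal{S},\circ)\to\mathrm{Sym}(X)$, $(\sigma_a,\gamma_b)\mapsto\sigma_a\lambda_b|_X$, is a well-defined group homomorphism.
   Context: A set-theoretic solution $(X,r)$ of the Yang--Baxter equation: $X$ non-empty, $r$ satisfies the braid relation $(r\times\mathrm{id})(\mathrm{id}\times r)(r\times\mathrm{id})=(\mathrm{id}\times r)(r\times\mathrm{id})(\mathrm{id}\times r)$; write $r(x,y)=(\lambda_x(y),\rho_y(x))$; non-degenerate means $r$ bijective and all $\lambda_x,\rho_y$ bijective. Put $\sigma_y(x)=\lambda_y\rho_{\lambda_x^{-1}(y)}(x)$. Let $A$ be the monoid $\langle X\mid x+y=y+\sigma_y(x)\rangle$, identified (via a known bijection fixing $X$) with the monoid $M=\langle X\mid x\circ y=\lambda_x(y)\circ\rho_y(x)\rangle$, so that $A$ carries operations $+$ and $\circ$ and maps $a\mapsto\lambda_a$ (monoid morphism $(A,\circ)\to\mathrm{Aut}(A,+)$), $a\mapsto\rho_a$ (anti-morphism of $(A,\circ)$), $a\mapsto\sigma_a$ (anti-morphism $(A,+)\to\mathrm{Aut}(A,+)$) extending those on $X$, with $a\circ b=a+\lambda_a(b)$, $a+b=b+\sigma_b(a)$, $\sigma_{\lambda_a(b)}\lambda_a=\lambda_a\sigma_b$; these maps leave $X$ invariant. For $a\in A$ let $\gamma_a=(\sigma_a^{-1},\lambda_a)$;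 $\mathcal{G}=\{\gamma_a:a\in A\}$ is a skew left brace with $\gamma_a+\gamma_b=\gamma_{a+b}$, $\gamma_a\circ\gamma_b=\gamma_{a\circ b}$ (well defined). Let $\mathcal{C}=\{\sigma_a:a\in A\}$, a group under composition ($\sigma_a\sigma_b=\sigma_{b+a}$), regarded as a trivial skew left brace (addition = composition). $\mathcal{S}=\mathcal{C}\rtimes\mathcal{G}$ is the set of pairs $(\sigma_a,\gamma_b)$ with componentwise addition and $(\sigma_a,\gamma_b)\circ(\sigma_c,\gamma_d)=(\sigma_a\sigma_{\lambda_b(c)},\gamma_{b\circ d})=(\sigma_{\lambda_b(c)+a},\gamma_{b\circ d})$. *)

From mathcomp Require Import all_boot all_fingroup.
Set Implicit Arguments. Unset Strict Implicit. Unset Printing Implicit Defensive.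

Section Solutions.
Variable X : finType.
Variable r : X * X -> X * X.

Definition lamX (x y : X) : X := (r (x, y)).1.
Definition rhoX (y x : X) : X := (r (x, y)).2.

Definition r12 (t : X * X * X) : X * X * X :=
  let: (x, y, z) := t in let: (u, v) := r (x, y) in (u, v, z).
Definition r23 (t : X * X * X) : X * X * X :=
  let: (x, y, z) := t in let: (u, v) := r (y, z) in (x, u, v).

Definition braid : Prop := forall t, r12 (r23 (r12 t)) = r23 (r12 (r23 t)).

Definition nondegenerate : Prop :=
  bijective r /\ (forall x, bijective (lamX x)) /\ (forall y, bijective (rhoX y)).

(* lambda_x^{-1}(y); under non-degeneracy it is the inverse of lambda_x *)
Definition lamX_inv (x y : X) : X := odflt y [pick z | lamX x z == y].

Definition sigX (y x : X) : X := lamX y (rhoX (lamX_inv x y) x).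

End Solutions.

Definition is_monoid (M : Type) (op : M -> M -> M) (e : M) : Prop :=
  (forall a b c, op a (op b c) = op (op a b) c) /\
  (forall a, op e a = a) /\ (forall a, op a e = a).

(* (A, op, e) together with iota : X -> A is the monoid presented by the
   generators X and the relations  iota x * iota y = iota u * iota v
   where (u, v) = rel x y  (universal property of the presentation). *)
Definition presents (X : Type) (A : Type) (op : A -> A -> A) (e : A)
    (iota : X -> A) (rel : X -> X -> X * X) : Prop :=
  is_monoid op e /\
  (forall x y, op (iota x) (iota y) = op (iota (rel x y).1) (iota (rel x y).2)) /\
  forall (M : Type) (mop : M -> M -> M) (me : M), is_monoid mop me ->
  forall f : X -> M,
    (forall x y, mop (f x) (f y) = mop (f (rel x y).1) (f (rel x y).2)) ->
    exists g : A -> M,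
      (g e = me /\ (forall u v, g (op u v) = mop (g u) (g v)) /\
       forall x, g (iota x) = f x) /\
      (forall g' : A -> M,
         (g' e = me /\ (forall u v, g' (op u v) = mop (g' u) (g' v)) /\
          forall x, g' (iota x) = f x) -> g' =1 g).

(* X is identified with
   a subset of A via the injection iota.  The unit of both + and o is zero
   (the empty word). *)
Definition structure_data (X : finType) (r : X * X -> X * X)
    (A : Type) (iota : X -> A) (add circ : A -> A -> A) (zero : A)
    (lam sig siginv : A -> A -> A) : Prop :=
  injective iota /\
  (* A = < X | x + y = y + sigma_y(x) > *)
  presents add zero iota (fun x y => (y, sigX r y x)) /\
  (* (A, o) is identified with M = < X | x o y = lambda_x(y) o rho_y(x) > *)
  presents circ zero iota (fun x y => r (x, y)) /\
  (forall a b, lam (circ a b) =1 lam a \o lam b) /\ lam zero =1 id /\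
  (forall a, bijective (lam a)) /\
  (forall a u v, lam a (add u v) = add (lam a u) (lam a v)) /\
  (forall a, lam a zero = zero) /\
  (forall x y, lam (iota x) (iota y) = iota (lamX r x y)) /\
  (forall a b, sig (add a b) =1 sig b \o sig a) /\ sig zero =1 id /\
  (forall a, cancel (sig a) (siginv a) /\ cancel (siginv a) (sig a)) /\
  (forall a u v, sig a (add u v) = add (sig a u) (sig a v)) /\
  (forall a, sig a zero = zero) /\
  (forall x y, sig (iota y) (iota x) = iota (sigX r y x)) /\
  (forall a b, circ a b = add a (lam a b)) /\
  (forall a b, add a b = add b (sig b a)) /\
  (forall a b, sig (lam a b) \o lam a =1 lam a \o sig b) /\
  (forall a x, exists y, lam a (iota x) = iota y) /\
  (forall a x, exists y, sig a (iota x) = iota y).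

(* gamma_b = (sigma_b^{-1}, lambda_b) ; elements of S are pairs (sigma_a, gamma_b).
   Two representatives (a,b), (a',b') give the same element of S iff the
   corresponding maps A -> A coincide. *)
Definition S_eq (A : Type) (lam sig siginv : A -> A -> A) (a b a' b' : A) : Prop :=
  sig a =1 sig a' /\ siginv b =1 siginv b' /\ lam b =1 lam b'.

(** Both [sigma_a] and [lambda_b] are bijections of [A] that map [X] into
    itself, so [sigma_a lambda_b] restricts to a permutation of the finite set
    [X].  Restriction turns composition into the product of permutations, and
    [sigma_{lambda_b(c)+a} lambda_{b o d} = sigma_a lambda_b sigma_c lambda_d]
    because [sigma] is an anti-morphism of [(A,+)], [lambda] a morphism of
    [(A,o)], and [sigma_{lambda_b(c)} lambda_b = lambda_b sigma_c]. *)
From mathcomp Require Import all_boot all_fingroup.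
From Stdlib Require Import ClassicalEpsilon.

Set Implicit Arguments.
Unset Strict Implicit.
Unset Printing Implicit Defensive.

Local Open Scope group_scope.

Section InducedPerm.
Variables (X : finType) (A : Type) (iota : X -> A).
Hypothesis iota_inj : injective iota.

Definition image_stable (f : A -> A) : Prop :=
  forall x, exists y, f (iota x) = iota y.

(* [x] only witnesses that [X] is inhabited; the value is meaningful when [f]
   is [image_stable]. *)
Definition induced_fun (f : A -> A) (x : X) : X :=
  epsilon (inhabits x) (fun y => iota y = f (iota x)).

Definition induced_perm (f : A -> A) : {perm X} :=
  odflt 1 [pick s : {perm X} | [forall x, s x == induced_fun f x]].

Lemma eq_induced_perm (f g : A -> A) : f =1 g -> induced_perm f = induced_perm g.
Proof.
move=> fg; rewrite /induced_perm /induced_fun; congr odflt; apply: eq_pick => s.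
by apply: eq_forallb => x; rewrite fg.
Qed.

Lemma image_stable_comp (f g : A -> A) :
  image_stable f -> image_stable g -> image_stable (f \o g).
Proof. by move=> f_st g_st x; case: (g_st x) => y /= ->; apply: f_st. Qed.

Section OneMap.
Variable f : A -> A.
Hypotheses (f_inj : injective f) (f_stable : image_stable f).

Lemma induced_funE x : iota (induced_fun f x) = f (iota x).
Proof.
apply: (epsilon_spec (inhabits x) (fun y => iota y = f (iota x))).
by case: (f_stable x) => y ->; exists y.
Qed.

Lemma induced_fun_inj : injective (induced_fun f).
Proof. by move=> x y /(congr1 iota); rewrite !induced_funE => /f_inj /iota_inj. Qed.

Lemma induced_permE x : iota (induced_perm f x) = f (iota x).
Proof.
rewrite /induced_perm; case: pickP => [s /forallP s_f | no_perm].
  by rewrite (eqP (s_f x)) induced_funE.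
suff: [forall y, perm induced_fun_inj y == induced_fun f y] by rewrite no_perm.
by apply/forallP => y; rewrite permE.
Qed.

End OneMap.

Lemma induced_permM (f g : A -> A) :
    injective f -> injective g -> image_stable f -> image_stable g ->
  induced_perm (f \o g) = induced_perm g * induced_perm f.
Proof.
move=> f_inj g_inj f_st g_st; apply/permP => x; apply: iota_inj.
have fg_inj : injective (f \o g) := inj_comp f_inj g_inj.
have fg_st := image_stable_comp f_st g_st.
by rewrite permM !induced_permE.
Qed.

End InducedPerm.

Section StructureData.
Variables (X : finType) (r : X * X -> X * X).
Variables (A : Type) (iota : X -> A) (add circ : A -> A -> A) (zero : A).
Variables (lam sig siginv : A -> A -> A).
Hypothesis HA : structure_data r iota add circ zero lam sig siginv.

Lemma sig_lam_inj a b : injective (sig a \o lam b).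
Proof.
case: HA => _ [_ [_ [_ [_ [lam_bij [_ [_ [_ [_ [_ [sig_can _]]]]]]]]]]].
apply: inj_comp; first exact: can_inj (proj1 (sig_can a)).
by case: (lam_bij b) => lam_inv lamK _; apply: can_inj lamK.
Qed.

Lemma sig_lam_stable a b : image_stable iota (sig a \o lam b).
Proof.
case: HA => _ [_ [_ [_ [_ [_ [_ [_ [_ [_ [_ [_ [_ [_ [_
  [_ [_ [_ [lam_stable sig_stable]]]]]]]]]]]]]]]]]].
by move=> x; case: (lam_stable b x) => y /= ->; apply: sig_stable.
Qed.

Lemma sig_lam_morph a b c d :
  sig (add (lam b c) a) \o lam (circ b d) =1 (sig a \o lam b) \o (sig c \o lam d).
Proof.
case: HA => _ [_ [_ [lamM [_ [_ [_ [_ [_ [sigM [_ [_ [_ [_ [_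
  [_ [_ [sig_lam _]]]]]]]]]]]]]]]]].
move=> y; rewrite /= sigM lamM /=.
by have /= -> := sig_lam b c (lam d y).
Qed.

End StructureData.

Theorem lemma2p3 (X : finType) (r : X * X -> X * X)
    (Hbraid : braid r) (Hnd : nondegenerate r)
    (A : Type) (iota : X -> A) (add circ : A -> A -> A) (zero : A)
    (lam sig siginv : A -> A -> A)
    (HA : structure_data r iota add circ zero lam sig siginv) :
  exists phi : A -> A -> {perm X},
    (* phi a b is the permutation sigma_a lambda_b |_X of X *)
    (forall a b x, iota (phi a b x) = sig a (lam b (iota x))) /\
    (* well defined on S = C x| G *)
    (forall a b a' b', S_eq lam sig siginv a b a' b' -> phi a b = phi a' b') /\
    (* homomorphism: (sigma_a,gamma_b) o (sigma_c,gamma_d)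
                     = (sigma_{lambda_b(c)+a}, gamma_{b o d}) is sent to the
       composite of the images *)
    (forall a b c d x,
       phi (add (lam b c) a) (circ b d) x = phi a b (phi c d x)).
Proof.
have iota_inj : injective iota by case: HA.
have sl_inj a b := sig_lam_inj HA (a := a) (b := b).
have sl_stable := sig_lam_stable HA.
exists (fun a b => induced_perm iota (sig a \o lam b)); split; last split.
- by move=> a b x; rewrite induced_permE.
- move=> a b a' b' [sig_eq [_ lam_eq]]; apply: eq_induced_perm => y.
  by rewrite /= sig_eq lam_eq.
- move=> a b c d x.
  by rewrite (eq_induced_perm _ (sig_lam_morph HA a b c d)) induced_permM
    ?permM.
Qed.
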